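(* The dcpo $\mathcal Q\mathbb R_\ell$, with its Scott topology, is sober.
   Context: The Sorgenfrey line $\mathbb R_\ell$ is $\mathbb R$ with the topology generated by the half-open intervals $[a,b[$, $a<b$. $\mathcal Q\mathbb R_\ell$ is the set of non-empty compact subsets of $\mathbb R_\ell$ ordered by reverse inclusion; it is a dcpo. A space is sober if every irreducible closed subset is the closure of a unique point. *)

From Stdlib Require Import Reals List.
Open Scope R_scope.

(* U is open in R_l iff it is a union of half-open intervals [a,b[, i.e.
   every x in U has some b > x with [x,b[ contained in U. *)
Definition sorgenfrey_open (U : R -> Prop) : Prop :=
  forall x, U x -> exists b, x < b /\ forall y, x <= y < b -> U y.

Definition sorgenfrey_compact (K : R -> Prop) : Prop :=
  forall (I : Type) (V : I -> R -> Prop),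
    (forall i, sorgenfrey_open (V i)) ->
    (forall x, K x -> exists i, V i x) ->
    exists l : list I, forall x, K x -> exists i, In i l /\ V i x.

Definition QRl : Type :=
  { K : R -> Prop | (exists x, K x) /\ sorgenfrey_compact K }.

Definition QRl_le (K L : QRl) : Prop :=
  forall x, proj1_sig L x -> proj1_sig K x.

Definition directed {T : Type} (le : T -> T -> Prop) (D : T -> Prop) : Prop :=
  (exists d, D d) /\
  forall a b, D a -> D b -> exists c, D c /\ le a c /\ le b c.

Definition is_sup {T : Type} (le : T -> T -> Prop) (D : T -> Prop) (s : T) : Prop :=
  (forall d, D d -> le d s) /\
  (forall u, (forall d, D d -> le d u) -> le s u).

Definition scott_open {T : Type} (le : T -> T -> Prop) (U : T -> Prop) : Prop :=
  (forall x y, U x -> le x y -> U y) /\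
  (forall (D : T -> Prop) (s : T), directed le D -> is_sup le D s -> U s ->
     exists d, D d /\ U d).

Definition is_closed {T : Type} (opn : (T -> Prop) -> Prop) (C : T -> Prop) : Prop :=
  opn (fun x => ~ C x).

Definition irreducible_closed {T : Type} (opn : (T -> Prop) -> Prop)
  (C : T -> Prop) : Prop :=
  is_closed opn C /\ (exists x, C x) /\
  forall A B, is_closed opn A -> is_closed opn B ->
    (forall x, C x -> A x \/ B x) ->
    (forall x, C x -> A x) \/ (forall x, C x -> B x).

Definition closure_pt {T : Type} (opn : (T -> Prop) -> Prop) (x : T) : T -> Prop :=
  fun y => forall C, is_closed opn C -> C x -> C y.

Definition sober {T : Type} (opn : (T -> Prop) -> Prop) : Prop :=
  forall C, irreducible_closed opn C ->
    exists! x : T, forall y, C y <-> closure_pt opn x y.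

From Stdlib Require Import Reals Lra List Classical.
From Stdlib Require Import FunctionalExtensionality PropExtensionality ProofIrrelevance.
Open Scope R_scope.

(* Q R_l is a dcpo in which the sup of a directed family is its intersection:
   R_l is well-filtered, i.e. if the intersection of a directed family of compact
   sets lies in an open set W, then so does one of its members.  An irreducible
   Scott-closed set C is therefore the closure of the intersection of its members
   as soon as C is directed, i.e. closed under binary intersections.  For L1, L2
   in C and a clopen U containing L2, C is covered by the Scott-closed sets
   {K | K ⊄ U} and {K | K ∩ U ∈ C}, the first of which misses L2; by
   irreducibility L1 ∩ U ∈ C.  As the complement of every [x,b[ is clopen,
   L1 ∩ L2 is the directed intersection of these sets L1 ∩ U, hence lies in C. *)

Section ScottTopology.
Context {T : Type} (le : T -> T -> Prop).

Lemma scott_open_ext (U V : T -> Prop) :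
  (forall x, U x <-> V x) -> scott_open le U -> scott_open le V.
Proof.
  intros UV [Uup Usup]. split.
  - intros x y Vx xy. apply UV, (Uup x y); [apply UV|]; assumption.
  - intros D s HD Hs Vs. destruct (Usup D s HD Hs (proj2 (UV s) Vs)) as [d [Dd Ud]].
    exists d. split; [|apply UV]; assumption.
Qed.

Lemma is_closed_scott_compl (U : T -> Prop) :
  scott_open le U -> is_closed (scott_open le) (fun x => ~ U x).
Proof.
  apply scott_open_ext. intros x. split; [tauto | apply NNPP].
Qed.

Lemma scott_closed_down (C : T -> Prop) x y :
  is_closed (scott_open le) C -> C y -> le x y -> C x.
Proof.
  intros HC Cy xy. apply NNPP. intros nCx. exact (proj1 HC x y nCx xy Cy).
Qed.

Lemma scott_closed_sup (C D : T -> Prop) s :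
  is_closed (scott_open le) C -> directed le D -> (forall d, D d -> C d) ->
  is_sup le D s -> C s.
Proof.
  intros HC HD DC Hs. apply NNPP. intros nCs.
  destruct (proj2 HC D s HD Hs nCs) as [d [Dd nCd]]. exact (nCd (DC d Dd)).
Qed.

Hypothesis le_refl : forall x, le x x.
Hypothesis le_trans : forall x y z, le x y -> le y z -> le x z.

Lemma directed_list_upper_bound (D : T -> Prop) :
  directed le D -> forall l : list T,
  exists e, D e /\ forall d, In d l -> D d -> le d e.
Proof.
  intros HD l. induction l as [|a l [e [De He]]].
  - destruct (proj1 HD) as [d Dd]. exists d. split; [assumption | intros d' []].
  - destruct (classic (D a)) as [Da | nDa].
    + destruct (proj2 HD a e Da De) as [c [Dc [ac ec]]].
      exists c. split; [assumption|]. intros d [<- | dl] Dd; [assumption|].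
      exact (le_trans _ _ _ (He d dl Dd) ec).
    + exists e. split; [assumption|]. intros d [<- | dl] Dd; [contradiction|].
      exact (He d dl Dd).
Qed.

Lemma closure_pt_scott x y : closure_pt (scott_open le) x y <-> le y x.
Proof.
  split.
  - intros Hxy. apply (Hxy (fun z => le z x)); [split | apply le_refl].
    + intros z z' nzx zz' z'x. exact (nzx (le_trans _ _ _ zz' z'x)).
    + intros D s _ Hs nsx. apply NNPP. intros nD. apply nsx, (proj2 Hs).
      intros d Dd. apply NNPP. intros ndx. apply nD. exists d. split; assumption.
  - intros yx C HC Cx. exact (scott_closed_down C y x HC Cx yx).
Qed.

Hypothesis le_antisym : forall x y, le x y -> le y x -> x = y.
Hypothesis directed_sup : forall D, directed le D -> exists s, is_sup le D s.

Lemma sober_scott_of_irreducible_directed :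
  (forall C, irreducible_closed (scott_open le) C -> directed le C) ->
  sober (scott_open le).
Proof.
  intros Hdir C HI. pose proof (proj1 HI) as HC. pose proof (Hdir C HI) as HD.
  destruct (directed_sup C HD) as [s Hs].
  assert (Cs : C s) by exact (scott_closed_sup C C s HC HD (fun d Cd => Cd) Hs).
  assert (HCs : forall y, C y <-> closure_pt (scott_open le) s y).
  { intros y. rewrite closure_pt_scott. split.
    - exact (proj1 Hs y).
    - exact (scott_closed_down C y s HC Cs). }
  exists s. split; [exact HCs|].
  intros x Hx. apply le_antisym.
  - apply closure_pt_scott, Hx, Cs.
  - apply closure_pt_scott, HCs, Hx, closure_pt_scott, le_refl.
Qed.

End ScottTopology.

Definition sorgenfrey_clopen (U : R -> Prop) : Prop :=
  sorgenfrey_open U /\ sorgenfrey_open (fun x => ~ U x).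

Lemma sorgenfrey_open_union (I : Type) (V : I -> R -> Prop) :
  (forall i, sorgenfrey_open (V i)) -> sorgenfrey_open (fun x => exists i, V i x).
Proof.
  intros HV x [i Vix]. destruct (HV i x Vix) as [b [xb Hb]].
  exists b. split; [assumption|]. intros y Hy. exists i. exact (Hb y Hy).
Qed.

Lemma sorgenfrey_open_guard (P : Prop) (U : R -> Prop) :
  sorgenfrey_open U -> sorgenfrey_open (fun x => P /\ U x).
Proof.
  intros HU x [p Ux]. destruct (HU x Ux) as [b [xb Hb]].
  exists b. split; [assumption|]. intros y Hy. exact (conj p (Hb y Hy)).
Qed.

Lemma sorgenfrey_compact_ext (K K' : R -> Prop) :
  (forall x, K x <-> K' x) -> sorgenfrey_compact K -> sorgenfrey_compact K'.
Proof.
  intros KK' HK I V HV Hcov. destruct (HK I V HV) as [l Hl].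
  - intros x Kx. apply Hcov, KK', Kx.
  - exists l. intros x K'x. apply Hl, KK', K'x.
Qed.

Lemma sorgenfrey_compact_diff (K O : R -> Prop) :
  sorgenfrey_compact K -> sorgenfrey_open O ->
  sorgenfrey_compact (fun x => K x /\ ~ O x).
Proof.
  intros HK HO I V HV Hcov.
  destruct (HK (option I) (fun o => match o with Some i => V i | None => O end))
    as [l Hl].
  - intros [i|]; auto.
  - intros x Kx. destruct (classic (O x)) as [Ox | nOx].
    + exists None. exact Ox.
    + destruct (Hcov x (conj Kx nOx)) as [i Vix]. exists (Some i). exact Vix.
  - exists (flat_map (fun o => match o with Some i => i :: nil | None => nil end) l).
    intros x [Kx nOx]. destruct (Hl x Kx) as [[i|] [il Vix]]; [|contradiction].
    exists i. split; [|assumption]. apply in_flat_map. exists (Some i). simpl; auto.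
Qed.

Lemma list_lower_bound_gt (x : R) (l : list R) :
  exists m, x < m /\ forall b, In b l -> x < b -> m <= b.
Proof.
  induction l as [|a l [m [xm Hm]]].
  - exists (x + 1). split; [lra | intros b []].
  - destruct (Rlt_dec x a) as [xa | nxa].
    + exists (Rmin a m). split; [apply Rmin_glb_lt; assumption|].
      intros b [<- | bl] xb; [apply Rmin_l|].
      eapply Rle_trans; [apply Rmin_r | exact (Hm b bl xb)].
    + exists m. split; [assumption|]. intros b [<- | bl] xb; [contradiction|].
      exact (Hm b bl xb).
Qed.

(* A point x outside K is separated from K by the cover of K by ]-oo,x[ and the
   [b,+oo[ with b > x. *)
Lemma sorgenfrey_compact_closed (K : R -> Prop) :
  sorgenfrey_compact K -> sorgenfrey_open (fun x => ~ K x).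
Proof.
  intros HK x nKx.
  destruct (HK R (fun b y => y < x \/ (x < b /\ b <= y))) as [l Hl].
  - intros b y [yx | [xb by_]].
    + exists x. split; [assumption|]. intros z Hz. left; lra.
    + exists (y + 1). split; [lra|]. intros z Hz. right; lra.
  - intros y Ky. destruct (Rtotal_order y x) as [yx | [-> | xy]].
    + exists x. left; assumption.
    + contradiction.
    + exists y. right; split; lra.
  - destruct (list_lower_bound_gt x l) as [m [xm Hm]].
    exists m. split; [assumption|]. intros y [xy ym] Ky.
    destruct (Hl y Ky) as [b [bl [yx | [xb by_]]]]; [lra|].
    specialize (Hm b bl xb). lra.
Qed.

Lemma sorgenfrey_clopen_setT : sorgenfrey_clopen (fun _ => True).
Proof.
  split.
  - intros x _. exists (x + 1). split; [lra | auto].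
  - intros x nT. contradiction (nT I).
Qed.

Lemma sorgenfrey_clopen_setI (U V : R -> Prop) :
  sorgenfrey_clopen U -> sorgenfrey_clopen V -> sorgenfrey_clopen (fun x => U x /\ V x).
Proof.
  intros [Uo Uc] [Vo Vc]. split.
  - intros x [Ux Vx].
    destruct (Uo x Ux) as [b1 [xb1 H1]], (Vo x Vx) as [b2 [xb2 H2]].
    exists (Rmin b1 b2). split; [apply Rmin_glb_lt; assumption|].
    pose proof (Rmin_l b1 b2). pose proof (Rmin_r b1 b2).
    intros y Hy. split; [apply H1 | apply H2]; lra.
  - intros x nUVx. destruct (classic (U x)) as [Ux | nUx].
    + assert (nVx : ~ V x) by tauto.
      destruct (Vc x nVx) as [b [xb Hb]]. exists b. split; [assumption|].
      intros y Hy [_ Vy]. exact (Hb y Hy Vy).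
    + destruct (Uc x nUx) as [b [xb Hb]]. exists b. split; [assumption|].
      intros y Hy [Uy _]. exact (Hb y Hy Uy).
Qed.

Lemma sorgenfrey_clopen_not_interval (a b : R) :
  a < b -> sorgenfrey_clopen (fun y => ~ (a <= y < b)).
Proof.
  intros ab. split.
  - intros y Hy. destruct (Rlt_dec y a) as [ya | nya].
    + exists a. split; [assumption|]. intros z Hz. lra.
    + assert (b <= y) by (apply Rnot_lt_le; intro; apply Hy; lra).
      exists (y + 1). split; [lra|]. intros z Hz. lra.
  - intros y Hy. apply NNPP in Hy. exists b. split; [lra|].
    intros z Hz nz. apply nz. lra.
Qed.

Definition QRl_set (K : QRl) : R -> Prop := proj1_sig K.
Coercion QRl_set : QRl >-> Funclass.

Lemma QRl_nonempty (K : QRl) : exists x, K x.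
Proof. exact (proj1 (proj2_sig K)). Qed.

Lemma QRl_compact (K : QRl) : sorgenfrey_compact K.
Proof. exact (proj2 (proj2_sig K)). Qed.

Lemma QRl_open_compl (K : QRl) : sorgenfrey_open (fun x => ~ K x).
Proof. exact (sorgenfrey_compact_closed K (QRl_compact K)). Qed.

Lemma QRl_le_refl (K : QRl) : QRl_le K K.
Proof. intros x Kx. exact Kx. Qed.

Lemma QRl_le_trans (K L M : QRl) : QRl_le K L -> QRl_le L M -> QRl_le K M.
Proof. intros KL LM x Mx. exact (KL x (LM x Mx)). Qed.

Lemma QRl_le_antisym (K L : QRl) : QRl_le K L -> QRl_le L K -> K = L.
Proof.
  destruct K as [A HA], L as [B HB]. unfold QRl_le. simpl. intros BA AB.
  assert (A = B) as <-.
  { apply functional_extensionality. intros x.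
    apply propositional_extensionality. split; auto. }
  f_equal. apply proof_irrelevance.
Qed.

Lemma QRl_setI_closed (K : QRl) (W : R -> Prop) :
  sorgenfrey_open (fun x => ~ W x) -> (exists x, K x /\ W x) ->
  exists M : QRl, forall x, M x <-> K x /\ W x.
Proof.
  intros HW Hne.
  assert (cpt : sorgenfrey_compact (fun x => K x /\ W x)).
  { apply (sorgenfrey_compact_ext (fun x => K x /\ ~ ~ W x)).
    - intros x. split; intros [Kx Wx]; split; auto. apply NNPP, Wx.
    - exact (sorgenfrey_compact_diff K _ (QRl_compact K) HW). }
  exists (exist _ (fun x => K x /\ W x) (conj Hne cpt)). reflexivity.
Qed.

(* The complements of the members of D cover the compact set d0 \ W, for any d0 in D. *)
Lemma QRl_well_filtered (D : QRl -> Prop) (W : R -> Prop) :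
  directed QRl_le D -> sorgenfrey_open W ->
  (forall x, (forall d, D d -> d x) -> W x) ->
  exists e, D e /\ forall x, e x -> W x.
Proof.
  intros HD HW DW. destruct (proj1 HD) as [d0 Dd0].
  destruct (sorgenfrey_compact_diff d0 W (QRl_compact d0) HW QRl
              (fun d x => D d /\ ~ d x)) as [l Hl].
  - intros d. exact (sorgenfrey_open_guard (D d) _ (QRl_open_compl d)).
  - intros x [d0x nWx].
    destruct (not_all_ex_not _ _ (fun H => nWx (DW x H))) as [d Hd].
    exists d. exact (imply_to_and _ _ Hd).
  - destruct (directed_list_upper_bound QRl_le QRl_le_trans D HD (d0 :: l))
      as [e [De He]].
    exists e. split; [assumption|]. intros x ex. apply NNPP. intros nWx.
    destruct (Hl x (conj (He d0 (or_introl eq_refl) Dd0 x ex) nWx))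
      as [d [dl [Dd ndx]]].
    exact (ndx (He d (or_intror dl) Dd x ex)).
Qed.

Lemma QRl_directed_inter (D : QRl -> Prop) :
  directed QRl_le D -> exists s : QRl, forall x, s x <-> forall d, D d -> d x.
Proof.
  intros HD.
  assert (ne : exists x, forall d, D d -> d x).
  { apply NNPP. intros nne.
    destruct (QRl_well_filtered D (fun _ => False) HD) as [e [De He]].
    - intros x [].
    - intros x Dx. apply nne. exists x. exact Dx.
    - destruct (QRl_nonempty e) as [y ey]. exact (He y ey). }
  assert (cpt : sorgenfrey_compact (fun x => forall d, D d -> d x)).
  { destruct (proj1 HD) as [d0 Dd0].
    apply (sorgenfrey_compact_ext (fun x => d0 x /\ ~ exists d, D d /\ ~ d x)).
    - intros x. split.
      + intros [_ H] d Dd. apply NNPP. intros ndx. apply H. exists d. split; assumption.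
      + intros H. split; [exact (H d0 Dd0)|]. intros [d [Dd ndx]]. exact (ndx (H d Dd)).
    - apply sorgenfrey_compact_diff; [apply QRl_compact|].
      apply (sorgenfrey_open_union QRl (fun d x => D d /\ ~ d x)).
      intros d. exact (sorgenfrey_open_guard (D d) _ (QRl_open_compl d)). }
  exists (exist _ (fun x => forall d, D d -> d x) (conj ne cpt)). reflexivity.
Qed.

Lemma is_sup_QRl_inter (D : QRl -> Prop) (s : QRl) :
  (forall x, s x <-> forall d, D d -> d x) -> is_sup QRl_le D s.
Proof.
  intros Hs. split.
  - intros d Dd x sx. exact (proj1 (Hs x) sx d Dd).
  - intros u Hu x ux. apply (proj2 (Hs x)). intros d Dd. exact (Hu d Dd x ux).
Qed.

Lemma QRl_sup_inter (D : QRl -> Prop) (s : QRl) :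
  directed QRl_le D -> is_sup QRl_le D s -> forall x, s x <-> forall d, D d -> d x.
Proof.
  intros HD Hs x. split.
  - intros sx d Dd. exact (proj1 Hs d Dd x sx).
  - intros Dx. destruct (QRl_directed_inter D HD) as [s' Hs'].
    apply (proj2 Hs s' (proj1 (is_sup_QRl_inter D s' Hs'))), Hs', Dx.
Qed.

Lemma QRl_directed_sup (D : QRl -> Prop) :
  directed QRl_le D -> exists s, is_sup QRl_le D s.
Proof.
  intros HD. destruct (QRl_directed_inter D HD) as [s Hs].
  exists s. exact (is_sup_QRl_inter D s Hs).
Qed.

Lemma scott_open_box (W : R -> Prop) :
  sorgenfrey_open W -> scott_open QRl_le (fun K : QRl => forall x, K x -> W x).
Proof.
  intros HW. split.
  - intros K L KW KL x Lx. exact (KW x (KL x Lx)).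
  - intros D s HD Hs sW. apply (QRl_well_filtered D W HD HW).
    intros x Dx. apply sW, (QRl_sup_inter D s HD Hs), Dx.
Qed.

Definition QRl_trace (C : QRl -> Prop) (W : R -> Prop) (K : QRl) : Prop :=
  exists M : QRl, C M /\ forall x, M x <-> K x /\ W x.

Lemma QRl_traces_directed (C D : QRl -> Prop) (W : R -> Prop) :
  directed QRl_le D -> (forall d, D d -> QRl_trace C W d) ->
  directed QRl_le (fun M => C M /\ exists d, D d /\ forall x, M x <-> d x /\ W x).
Proof.
  intros HD DT. split.
  - destruct (proj1 HD) as [d Dd]. destruct (DT d Dd) as [M [CM HM]].
    exists M. split; [assumption|]. exists d. split; assumption.
  - intros M1 M2 [_ [d1 [Dd1 H1]]] [_ [d2 [Dd2 H2]]].
    destruct (proj2 HD d1 d2 Dd1 Dd2) as [d3 [Dd3 [d13 d23]]].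
    destruct (DT d3 Dd3) as [M3 [CM3 H3]].
    exists M3. split; [split; [assumption|]; exists d3; split; assumption|].
    split; intros x M3x; destruct (proj1 (H3 x) M3x) as [d3x Wx].
    + apply H1. exact (conj (d13 x d3x) Wx).
    + apply H2. exact (conj (d23 x d3x) Wx).
Qed.

Lemma scott_closed_trace (C : QRl -> Prop) (W : R -> Prop) :
  is_closed (scott_open QRl_le) C -> sorgenfrey_open (fun x => ~ W x) ->
  is_closed (scott_open QRl_le) (QRl_trace C W).
Proof.
  intros HC HW. split.
  - intros K L nTK KL [M [CM HM]]. apply nTK.
    destruct (QRl_setI_closed K W HW) as [M' HM'].
    { destruct (QRl_nonempty M) as [z Mz]. apply HM in Mz.
      exists z. split; [apply KL|]; apply Mz. }
    exists M'. split; [|assumption]. apply (scott_closed_down QRl_le C M' M HC CM).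
    intros z Mz. apply HM in Mz. apply HM'. split; [apply KL|]; apply Mz.
  - intros D s HD Hs nTs. apply NNPP. intros nD.
    assert (DT : forall d, D d -> QRl_trace C W d).
    { intros d Dd. apply NNPP. intros nTd. apply nD. exists d. split; assumption. }
    pose proof (QRl_traces_directed C D W HD DT) as HD'.
    destruct (QRl_directed_inter _ HD') as [s' Hs'].
    apply nTs. exists s'. split.
    + apply (scott_closed_sup QRl_le C _ s' HC HD'); [intros M [CM _]; exact CM|].
      exact (is_sup_QRl_inter _ s' Hs').
    + intros x. rewrite Hs'. split.
      * intros Hx. destruct (proj1 HD) as [d0 Dd0].
        destruct (DT d0 Dd0) as [M0 [CM0 HM0]].
        split; [|apply (HM0 x), Hx; split; [|exists d0]; auto].
        apply (QRl_sup_inter D s HD Hs). intros d Dd.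
        destruct (DT d Dd) as [M [CM HM]].
        apply (HM x), Hx. split; [|exists d]; auto.
      * intros [sx Wx] M [_ [d [Dd HM]]]. apply HM. split; [|assumption].
        exact (proj1 Hs d Dd x sx).
Qed.

Lemma irreducible_trace (C : QRl -> Prop) (U : R -> Prop) (L' L : QRl) :
  irreducible_closed (scott_open QRl_le) C -> sorgenfrey_clopen U ->
  C L' -> (forall x, L' x -> U x) -> C L -> QRl_trace C U L.
Proof.
  intros [HC [_ HI]] [Uo Uc] CL' L'U CL.
  destruct (HI _ (QRl_trace C U) (is_closed_scott_compl QRl_le _ (scott_open_box U Uo))
              (scott_closed_trace C U HC Uc)) as [Hbox | Htrace].
  - intros K CK. destruct (classic (forall x, K x -> U x)) as [KU | nKU].
    + right. exists K. split; [assumption|]. intros x. split; [auto | tauto].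
    + left. exact nKU.
  - contradiction (Hbox L' CL' L'U).
  - exact (Htrace L CL).
Qed.

Lemma irreducible_setI (C : QRl -> Prop) (L1 L2 : QRl) :
  irreducible_closed (scott_open QRl_le) C -> C L1 -> C L2 ->
  exists M, C M /\ forall x, M x <-> L1 x /\ L2 x.
Proof.
  intros HI CL1 CL2. pose proof (proj1 HI) as HC.
  set (D := fun M : QRl => C M /\ exists U, sorgenfrey_clopen U /\
              (forall x, L2 x -> U x) /\ forall x, M x <-> L1 x /\ U x).
  assert (DL1 : D L1).
  { split; [assumption|]. exists (fun _ => True).
    split; [exact sorgenfrey_clopen_setT|]. split; [auto | tauto]. }
  assert (HD : directed QRl_le D).
  { split; [exists L1; exact DL1|].
    intros M1 M2 [_ [U1 [U1c [L2U1 H1]]]] [_ [U2 [U2c [L2U2 H2]]]].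
    pose proof (sorgenfrey_clopen_setI U1 U2 U1c U2c) as Uc.
    destruct (irreducible_trace C _ L2 L1 HI Uc CL2
                (fun x L2x => conj (L2U1 x L2x) (L2U2 x L2x)) CL1) as [M [CM HM]].
    exists M. split; [split; [assumption|]; exists (fun x => U1 x /\ U2 x); auto|].
    split; intros x Mx; apply HM in Mx; [apply H1 | apply H2]; tauto. }
  destruct (QRl_directed_inter D HD) as [s Hs].
  exists s. split.
  - apply (scott_closed_sup QRl_le C D s HC HD); [intros d [Cd _]; exact Cd|].
    exact (is_sup_QRl_inter D s Hs).
  - intros x. rewrite Hs. split.
    + intros Dx. split; [exact (Dx L1 DL1)|]. apply NNPP. intros nL2x.
      destruct (QRl_open_compl L2 x nL2x) as [b [xb Hb]].
      pose proof (sorgenfrey_clopen_not_interval x b xb) as Uc.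
      assert (L2U : forall y, L2 y -> ~ (x <= y < b))
        by (intros y L2y yI; exact (Hb y yI L2y)).
      destruct (irreducible_trace C _ L2 L1 HI Uc CL2 L2U CL1) as [M [CM HM]].
      assert (Mx : M x) by (apply Dx; split; [assumption|]; eauto).
      apply HM in Mx. apply (proj2 Mx). lra.
    + intros [L1x L2x] M [_ [U [_ [L2U HM]]]]. apply HM. split; auto.
Qed.

Lemma QRl_irreducible_directed (C : QRl -> Prop) :
  irreducible_closed (scott_open QRl_le) C -> directed QRl_le C.
Proof.
  intros HI. split; [exact (proj1 (proj2 HI))|].
  intros L1 L2 CL1 CL2. destruct (irreducible_setI C L1 L2 HI CL1 CL2) as [M [CM HM]].
  exists M. split; [assumption|]. split; intros x Mx; apply HM in Mx; apply Mx.
Qed.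

Theorem proposition4p23 : sober (scott_open QRl_le).
Proof.
  apply sober_scott_of_irreducible_directed.
  - exact QRl_le_refl.
  - exact QRl_le_trans.
  - exact QRl_le_antisym.
  - exact QRl_directed_sup.
  - exact QRl_irreducible_directed.
Qed.
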